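(* A linear operator $\mathcal A$ on a semiunitary space $U$ is selfadjoint (i.e. $\langle\mathcal Au,v\rangle=\langle u,\mathcal Av\rangle$ for all $u,v\in U$) if and only if it is bounded and the induced operator $\mathcal A_1$ on the unitary space $U/U_0$ is selfadjoint. Likewise, $\mathcal A$ is metric (i.e. $\langle\mathcal Au,\mathcal Av\rangle=\langle u,v\rangle$ for all $u,v\in U$) if and only if it is bounded and $\mathcal A_1$ is metric.
   Context: A semiunitary space is a finite-dimensional complex vector space $U$ with a positive semidefinite Hermitian form $\langle\cdot,\cdot\rangle$; $\|u\|=\sqrt{\langle u,u\rangle}$; $U_0=\{u:\langle u,u\rangle=0\}$, and $U/U_0$ carries the inner product $\langle u+U_0,v+U_0\rangle=\langle u,v\rangle$. An operator is bounded if $\|\mathcal Au\|\le c\|u\|$ for some real $c>0$ and all $u$; then $U_0$ is invariant and $\mathcal A_1(u+U_0):=\mathcal Au+U_0$. *)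

From HB Require Import structures.
From mathcomp Require Import all_boot all_order all_algebra.
From mathcomp Require Import reals complex.
From Stdlib Require Import ClassicalEpsilon FunctionalExtensionality PropExtensionality.

Set Implicit Arguments.
Unset Strict Implicit.
Unset Printing Implicit Defensive.
Import Order.TTheory GRing.Theory Num.Theory.
Local Open Scope ring_scope.

Section Semiunitary.
Variables (R : realType) (U : vectType R[i]).

Definition psd_hermitian (f : U -> U -> R[i]) : Prop :=
  [/\ forall (a : R[i]) (u v w : U), f (a *: u + v) w = a * f u w + f v w,
      forall u v : U, f u v = (f v u)^*
    & forall u : U, 0 <= f u u].

Variable f : U -> U -> R[i].

Definition snorm (u : U) : R[i] := sqrtC (f u u).

Definition U0 (u : U) : Prop := f u u = 0.

Definition bounded (A : U -> U) : Prop :=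
  exists c : R, 0 < c /\ forall u, snorm (A u) <= (c%:C)%C * snorm u.

Definition selfadjoint (A : U -> U) : Prop :=
  forall u v, f (A u) v = f u (A v).

Definition metric (A : U -> U) : Prop :=
  forall u v, f (A u) (A v) = f u v.

Definition coset (u : U) : U -> Prop := fun x => exists w, U0 w /\ x = u + w.

(* The quotient U / U_0: the set of cosets u + U_0. *)
Definition quot : Type := {X : U -> Prop | exists u, X = coset u}.

Definition qclass (u : U) : quot := exist _ (coset u) (ex_intro _ u erefl).

Definition qrepr (X : quot) : U :=
  proj1_sig (constructive_indefinite_description _ (proj2_sig X)).

Definition qform (X Y : quot) : R[i] := f (qrepr X) (qrepr Y).

Definition induced (A : U -> U) (X : quot) : quot := qclass (A (qrepr X)).

Definition q_selfadjoint (B : quot -> quot) : Prop :=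
  forall X Y, qform (B X) Y = qform X (B Y).

Definition q_metric (B : quot -> quot) : Prop :=
  forall X Y, qform (B X) (B Y) = qform X Y.

End Semiunitary.

Arguments psd_hermitian {R U} f.
Arguments snorm {R U} f u.
Arguments U0 {R U} f u.
Arguments bounded {R U} f A.
Arguments selfadjoint {R U} f A.
Arguments metric {R U} f A.
Arguments coset {R U} f u _.
Arguments quot {R U} f.
Arguments qclass {R U} f u.
Arguments qrepr {R U} f X.
Arguments qform {R U} f X Y.
Arguments induced {R U} f A X.
Arguments q_selfadjoint {R U} f B.
Arguments q_metric {R U} f B.

(* If <w,w> = 0 then w is orthogonal to everything (Cauchy-Schwarz), so the
   form only depends on classes modulo U_0.  Hence, for an operator A mapping
   U_0 into itself, A_1 is selfadjoint (metric) exactly when A is.  A bounded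
   operator maps U_0 into itself, and so does a selfadjoint one, since
   <Aw,Aw> = <w,A(Aw)> = 0.  Conversely, in finite dimension every operator
   mapping U_0 into itself is bounded: for the positive semidefinite forms
   <u,v> and <Au,Av>, the null space of the first lies in that of the second,
   and an orthogonalisation of a spanning family shows that the second is
   dominated by a multiple of the first. *)
From HB Require Import structures.
From mathcomp Require Import all_boot all_order all_algebra.
From mathcomp Require Import reals complex.
From mathcomp Require Import ring lra.
From Stdlib Require Import ClassicalEpsilon.
Import Order.TTheory GRing.Theory Num.Theory.
Local Open Scope ring_scope.

Set Implicit Arguments.

Section HermitianForm.
Variables (R : realType) (U : vectType R[i]) (f : U -> U -> R[i]).
Hypothesis hf : psd_hermitian f.

Lemma formP a u v w : f (a *: u + v) w = a * f u w + f v w.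
Proof. by case: hf. Qed.

Lemma form_conj u v : f u v = (f v u)^*.
Proof. by case: hf. Qed.

Lemma form_ge0 u : 0 <= f u u.
Proof. by case: hf. Qed.

Lemma formDl u v w : f (u + v) w = f u w + f v w.
Proof. by have := formP 1 u v w; rewrite scale1r mul1r. Qed.

Lemma form0l w : f 0 w = 0.
Proof. by apply: (addrI (f 0 w)); rewrite -formDl !addr0. Qed.

Lemma formZl a u w : f (a *: u) w = a * f u w.
Proof. by rewrite -(addr0 (a *: u)) formP form0l addr0. Qed.

Lemma formNl u w : f (- u) w = - f u w.
Proof. by rewrite -scaleN1r formZl mulN1r. Qed.

Lemma formDr u v w : f w (u + v) = f w u + f w v.
Proof. by rewrite form_conj formDl rmorphD /= -!form_conj. Qed.

Lemma formZr a u w : f w (a *: u) = a^* * f w u.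
Proof. by rewrite form_conj formZl rmorphM /= -form_conj. Qed.

Lemma formNr u w : f w (- u) = - f w u.
Proof. by rewrite form_conj formNl rmorphN /= -form_conj. Qed.

Lemma formZZ a u : f (a *: u) (a *: u) = a * a^* * f u u.
Proof. by rewrite formZl formZr mulrA. Qed.

Lemma formDD_le u v : f (u + v) (u + v) <= 2%:R * f u u + 2%:R * f v v.
Proof.
have parallelogram : f (u + v) (u + v) + f (u - v) (u - v)
    = 2%:R * f u u + 2%:R * f v v.
  by rewrite !formDl !formDr !formNl !formNr; ring.
by rewrite -parallelogram lerDl form_ge0.
Qed.

Lemma formDD_orth u v : f u v = 0 -> f (u + v) (u + v) = f u u + f v v.
Proof.
move=> uv0; have vu0 : f v u = 0 by rewrite form_conj uv0 conjC0.
by rewrite !formDl !formDr uv0 vu0 addr0 add0r.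
Qed.

(* Expand <y - c w, y - c w> >= 0 with c := (<y,y> + 1) / <w,y>. *)
Lemma U0_orthl w y : U0 f w -> f w y = 0.
Proof.
move=> w0; set c := (f y y + 1) / f w y.
apply: contraTeq (form_ge0 (y - c *: w)) => wy_neq0.
have yy_real : (f y y)^* = f y y by rewrite -form_conj.
have expand : f (y - c *: w) (y - c *: w) = - (f y y + 2%:R).
  rewrite !formDl !formDr !formNl !formNr !formZl !formZr w0 (form_conj y w).
  rewrite /c rmorphM rmorphD fmorphV /= yy_real conjC1 -form_conj.
  by field; rewrite wy_neq0 andbT form_conj conjC_eq0.
by rewrite expand oppr_ge0 lt_geF // ltr_wpDl ?form_ge0 ?ltr0n.
Qed.

Lemma U0_orthr w y : U0 f w -> f y w = 0.
Proof. by move=> w0; rewrite form_conj U0_orthl ?conjC0. Qed.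

Lemma U0D u w : U0 f u -> U0 f w -> U0 f (u + w).
Proof. by rewrite /U0 => u0 w0; rewrite formDD_orth ?U0_orthl // addr0. Qed.

Lemma form_U0_eql {x u} y : U0 f (x - u) -> f x y = f u y.
Proof. by move=> xu0; rewrite -[x](subrK u) formDl U0_orthl ?add0r. Qed.

Lemma form_U0_eqr {x u} y : U0 f (x - u) -> f y x = f y u.
Proof. by move=> xu0; rewrite -[x](subrK u) formDr U0_orthr ?add0r. Qed.

Lemma span_orthl x (s : seq U) :
  {in s, forall y, f y x = 0} -> {in <<s>>%VS, forall v, f v x = 0}.
Proof.
move=> s_orth v /(@coord_span _ _ _ (in_tuple s)) ->.
elim/big_ind: _ => [|a b a0 b0|i _]; first exact: form0l.
  by rewrite formDl a0 b0 addr0.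
by rewrite formZl s_orth ?mulr0 ?mem_nth.
Qed.

End HermitianForm.

Section Domination.
Variables (R : realType) (U : vectType R[i]) (f g : U -> U -> R[i]).
Hypotheses (hf : psd_hermitian f) (hg : psd_hermitian g).
Hypothesis U0_sub : forall u, U0 f u -> U0 g u.

Definition dominated (V : {vspace U}) : Prop :=
  exists2 C : R[i], 0 <= C & {in V, forall u, g u u <= C * f u u}.

Lemma dominatedS (V W : {vspace U}) : (V <= W)%VS -> dominated W -> dominated V.
Proof. by move=> /subvP sVW [C C_ge0 hC]; exists C => // u /sVW /hC. Qed.

Lemma dominated_line x : dominated <[x]>.
Proof.
have [x0 | xn0] := eqVneq (f x x) 0.
  exists 0 => // _ /vlineP[b ->].
  by rewrite mul0r (formZZ hg) (U0_sub x0) mulr0.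
exists (g x x / f x x); first by rewrite divr_ge0 ?(form_ge0 hf) ?(form_ge0 hg).
by move=> _ /vlineP[b ->]; rewrite (formZZ hf) (formZZ hg) mulrCA divfK.
Qed.

Lemma dominated_addv (V W : {vspace U}) : {in V & W, forall v w, f v w = 0} ->
  dominated V -> dominated W -> dominated (V + W).
Proof.
move=> VW_orth [C1 C1_ge0 hC1] [C2 C2_ge0 hC2].
exists (2%:R * (C1 + C2)); first by rewrite mulr_ge0 ?addr_ge0 ?ler0n.
move=> _ /memv_addP[v Vv [w Ww ->]].
rewrite (formDD_orth hf _ _ (VW_orth _ _ Vv Ww)); apply: (le_trans (formDD_le hg v w)).
apply: (le_trans (lerD (ler_wpM2l _ (hC1 v Vv)) (ler_wpM2l _ (hC2 w Ww))));
  rewrite ?ler0n // -mulrA -mulrDr ler_wpM2l ?ler0n // mulrDl !mulrDr.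
by apply: lerD; rewrite ?lerDl ?lerDr mulr_ge0 ?(form_ge0 hf).
Qed.

(* Gram-Schmidt step: replace each y of s by its component orthogonal to x. *)
Lemma dominated_span s : dominated <<s>>.
Proof.
have [n] := ubnP (size s); elim: n s => // n IHn [|x s] /= size_lt.
  exists 0 => // u; rewrite span_nil memv0 => /eqP ->.
  by rewrite !(form0l hf, form0l hg) mul0r.
pose orth y := y - (f y x / f x x) *: x.
have orth_x y : f (orth y) x = 0.
  rewrite /orth (formDl hf) (formNl hf) (formZl hf).
  have [x0 | xn0] := eqVneq (f x x) 0; last by rewrite divfK ?subrr.
  by rewrite x0 mulr0 subr0 (U0_orthr hf).
have orth_span : (<<x :: s>> <= <[x]> + <<map orth s>>)%VS.
  apply/span_subvP => y /predU1P[-> | s_y].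
    exact: subvP (addvSl _ _) _ (memv_line x).
  have -> : y = (f y x / f x x) *: x + orth y by rewrite addrC subrK.
  by rewrite memv_add ?memvZ ?memv_line // memv_span // map_f.
have span_orth_x : {in <<map orth s>>%VS, forall w, f w x = 0}.
  by apply: span_orthl => // _ /mapP[y _ ->].
apply: dominatedS orth_span (dominated_addv _ (dominated_line x) (IHn _ _)).
  move=> _ w /vlineP[b ->] /span_orth_x w_x.
  by rewrite (formZl hf) (form_conj hf) w_x conjC0 mulr0.
by rewrite size_map.
Qed.

Lemma dominated_fullv : dominated fullv.
Proof. by rewrite -(span_basis (vbasisP fullv)); exact: dominated_span. Qed.

End Domination.

Section Operators.
Variables (R : realType) (U : vectType R[i]) (f : U -> U -> R[i]).
Hypothesis hf : psd_hermitian f.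
Variable A : {linear U -> U}.

Lemma selfadjoint_U0_stable : selfadjoint f A -> {homo A : w / U0 f w}.
Proof. by move=> sa w w0; rewrite /U0 sa (U0_orthl hf). Qed.

Lemma bounded_U0_stable : bounded f A -> {homo A : w / U0 f w}.
Proof.
case=> c [_ hc] w w0; move: (hc w); rewrite /snorm w0 sqrtC0 mulr0 => Aw_le0.
apply/eqP; rewrite -sqrtC_eq0 eq_le Aw_le0 sqrtC_ge0.
exact: form_ge0.
Qed.

Lemma metric_bounded : metric f A -> bounded f A.
Proof. by move=> m; exists 1; split=> [|u]; rewrite ?ltr01 // /snorm m mul1r. Qed.

Lemma U0_stable_bounded : {homo A : w / U0 f w} -> bounded f A.
Proof.
move=> A_U0.
have hg : psd_hermitian (fun u v => f (A u) (A v)).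
  split=> [a u v w | u v | u]; [| exact: form_conj | exact: form_ge0].
  by rewrite linearP (formP hf).
have [C C_ge0 hC] := dominated_fullv hf hg A_U0.
have ReC_ge0 : 0 <= complex.Re C by move: C_ge0; rewrite lecE => /andP[].
have c_ge0 : 0 <= ((complex.Re C + 1)%:C)%C by rewrite ler0c addr_ge0.
exists (complex.Re C + 1); split=> [|u]; first exact: ltr_wpDl.
rewrite /snorm -(sqrCK c_ge0) -sqrtCM ?nnegrE ?exprn_ge0 ?(form_ge0 hf) //.
rewrite ler_sqrtC ?nnegrE ?mulr_ge0 ?exprn_ge0 ?(form_ge0 hf) //.
apply: (le_trans (hC u (memvf u))); rewrite ler_wpM2r ?(form_ge0 hf) //.
by rewrite -[C]RRe_real ?ger0_real // -rmorphXn lecR; nra.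
Qed.

End Operators.

Section Quotient.
Variables (R : realType) (U : vectType R[i]) (f : U -> U -> R[i]).
Hypothesis hf : psd_hermitian f.

Lemma qrepr_qclass u : U0 f (qrepr f (qclass f u) - u).
Proof.
rewrite /qrepr; case: (constructive_indefinite_description _ _) => r /= coset_r.
have : coset f u u by exists 0; rewrite /U0 (form0l hf) addr0.
rewrite coset_r => -[w [w0 ->]].
by rewrite opprD addrA subrr add0r /U0 (formNl hf) (formNr hf) opprK.
Qed.

Lemma qform_eq {X Y u v} :
  U0 f (qrepr f X - u) -> U0 f (qrepr f Y - v) -> qform f X Y = f u v.
Proof. by move=> Xu Yv; rewrite /qform (form_U0_eql hf _ Xu) (form_U0_eqr hf _ Yv). Qed.

Lemma qrepr_induced (A : U -> U) X : U0 f (qrepr f (induced f A X) - A (qrepr f X)).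
Proof. exact: qrepr_qclass. Qed.

Lemma qrepr_refl X : U0 f (qrepr f X - qrepr f X).
Proof. by rewrite subrr /U0 (form0l hf). Qed.

Variable A : {linear U -> U}.
Hypothesis A_U0 : {homo A : w / U0 f w}.

Lemma qrepr_induced_qclass u : U0 f (qrepr f (induced f A (qclass f u)) - A u).
Proof.
set r := qrepr f (qclass f u).
have -> : qrepr f (induced f A (qclass f u)) - A u
    = (qrepr f (induced f A (qclass f u)) - A r) + A (r - u).
  by rewrite linearB addrA subrK.
by apply: (U0D hf); [exact: qrepr_induced | exact/A_U0/qrepr_qclass].
Qed.

Lemma q_selfadjoint_inducedE : q_selfadjoint f (induced f A) <-> selfadjoint f A.
Proof.
split=> [qsa u v | sa X Y].
  rewrite -(qform_eq (qrepr_induced_qclass u) (qrepr_qclass v)) qsa.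
  exact: qform_eq (qrepr_qclass u) (qrepr_induced_qclass v).
rewrite (qform_eq (qrepr_induced A X) (qrepr_refl Y)) sa.
by rewrite (qform_eq (qrepr_refl X) (qrepr_induced A Y)).
Qed.

Lemma q_metric_inducedE : q_metric f (induced f A) <-> metric f A.
Proof.
split=> [qm u v | m X Y].
  rewrite -(qform_eq (qrepr_induced_qclass u) (qrepr_induced_qclass v)) qm.
  exact: qform_eq (qrepr_qclass u) (qrepr_qclass v).
rewrite (qform_eq (qrepr_induced A X) (qrepr_induced A Y)) m.
by rewrite (qform_eq (qrepr_refl X) (qrepr_refl Y)).
Qed.

End Quotient.

Theorem lemma2p4 (R : realType) (U : vectType R[i]) (f : U -> U -> R[i])
  (hf : psd_hermitian f) (A : {linear U -> U}) :
  (selfadjoint f A <-> bounded f A /\ q_selfadjoint f (induced f A)) /\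
  (metric f A <-> bounded f A /\ q_metric f (induced f A)).
Proof.
split; split.
- move=> sa; have A_U0 := selfadjoint_U0_stable hf A sa.
  by split; [exact: U0_stable_bounded | exact/(q_selfadjoint_inducedE hf _ A_U0)].
- by case=> /(bounded_U0_stable hf A) A_U0 /(q_selfadjoint_inducedE hf _ A_U0).
- move=> m; have bA := metric_bounded A m.
  by split=> //; exact/(q_metric_inducedE hf _ (bounded_U0_stable hf A bA)).
- by case=> /(bounded_U0_stable hf A) A_U0 /(q_metric_inducedE hf _ A_U0).
Qed.
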